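(* Let $R=[0,1]^2$, $s\in\mathbb{N}$, $u=2^{-s}$, and let $(B_1,B_2)$ be a good box pair. Let $\ell=\{a\lambda+b\}$ and $\ell'=\{a'\lambda+b'\}$ be two lines in $\mathcal{L}$ traversing $(B_1,B_2)$, with $a,a'$ unit direction vectors and $b,b'$ the intersection points of $\ell,\ell'$ with the line $y=-x$. Then $\|b-b'\|_\infty\le4\sqrt u$. In particular, $B=O(\sqrt u)$, where $B$ is the supremum of $\|b_c-b\|_\infty$ over all lines in $\mathcal{L}$ traversing $(B_1,B_2)$, $b$ their intersection with $y=-x$, and $b_c$ the intersection of the line through $c_1,c_2$ with $y=-x$.
   Context: For $p,q\in\mathbb{R}^2$ write $p\le q$ if both coordinates satisfy $\le$. $R$ is split into $2^s\times2^s$ congruent closed squares (''boxes'') of side length $u$. A box pair is an ordered pair $(B_1,B_2)$ of boxes with centers $c_1,c_2$. Let $\mathcal{L}$ be the set of non-vertical lines in $\mathbb{R}^2$ with positive slope; each has a unit direction vector $a=(a_1,a_2)$ with positive coordinates, and $\hat{\ell}:=\min\{a_1,a_2\}$. A line $\ell\in\mathcal{L}$ traverses $(B_1,B_2)$ if it meets both boxes. A box pair is null if $c_1\not\le c_2$; close if $c_1\le c_2$ and $\|c_1-c_2\|_2<\sqrt u$; non-diagonal if $c_1\le c_2$, $\|c_1-c_2\|_2\ge\sqrt u$, and every traversing $\ell\in\mathcal{L}$ satisfies $\hat{\ell}<u^{1/5}$; good if it is neither null, close, nor non-diagonal. $O(\sqrt u)$ means bounded by an absolute constant times $\sqrt u$,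 uniformly over $s$ and good box pairs. *)

From Stdlib Require Import Reals Lra.
Open Scope R_scope.

Definition u_of (s : nat) : R := / (2 ^ s).

Definition box_index (s i : nat) : Prop := (i < 2 ^ s)%nat.
Definition in_box (s i j : nat) (p : R * R) : Prop :=
  INR i * u_of s <= fst p <= INR (i + 1) * u_of s /\
  INR j * u_of s <= snd p <= INR (j + 1) * u_of s.
Definition center (s i j : nat) : R * R :=
  ((INR i + / 2) * u_of s, (INR j + / 2) * u_of s).

Definition ple (p q : R * R) : Prop := fst p <= fst q /\ snd p <= snd q.
Definition dist2 (p q : R * R) : R :=
  sqrt ((fst p - fst q) ^ 2 + (snd p - snd q) ^ 2).
Definition distinf (p q : R * R) : R :=
  Rmax (Rabs (fst p - fst q)) (Rabs (snd p - snd q)).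

Definition unit_pos_dir (a : R * R) : Prop :=
  0 < fst a /\ 0 < snd a /\ fst a ^ 2 + snd a ^ 2 = 1.
Definition on_line (a b p : R * R) : Prop :=
  exists lam : R, p = (fst a * lam + fst b, snd a * lam + snd b).
Definition lhat (a : R * R) : R := Rmin (fst a) (snd a).

Definition traverses (s i1 j1 i2 j2 : nat) (a b : R * R) : Prop :=
  (exists p, on_line a b p /\ in_box s i1 j1 p) /\
  (exists p, on_line a b p /\ in_box s i2 j2 p).

Definition null_pair (s i1 j1 i2 j2 : nat) : Prop :=
  ~ ple (center s i1 j1) (center s i2 j2).
Definition close_pair (s i1 j1 i2 j2 : nat) : Prop :=
  ple (center s i1 j1) (center s i2 j2) /\
  dist2 (center s i1 j1) (center s i2 j2) < sqrt (u_of s).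
Definition nondiagonal_pair (s i1 j1 i2 j2 : nat) : Prop :=
  ple (center s i1 j1) (center s i2 j2) /\
  dist2 (center s i1 j1) (center s i2 j2) >= sqrt (u_of s) /\
  (forall a b : R * R, unit_pos_dir a -> traverses s i1 j1 i2 j2 a b ->
     lhat a < Rpower (u_of s) (1 / 5)).
Definition good_pair (s i1 j1 i2 j2 : nat) : Prop :=
  ~ null_pair s i1 j1 i2 j2 /\ ~ close_pair s i1 j1 i2 j2 /\
  ~ nondiagonal_pair s i1 j1 i2 j2.

Definition on_line_through (c1 c2 p : R * R) : Prop :=
  exists t : R, p = (fst c1 + t * (fst c2 - fst c1), snd c1 + t * (snd c2 - snd c1)).

(* The line through p and q meets y = -x at abscissa
   (p_x q_y - p_y q_x) / ((q_x + q_y) - (p_x + p_y)).  For a good pair the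
   two boxes are strictly separated in both coordinates: a line of slope
   between u^(1/5) and u^(-1/5) cannot cross two boxes of one column (or row)
   lying at distance at least sqrt u (good pairs force u <= 1/8).  Once the
   boxes are separated, this abscissa is a monotone Moebius function of each
   coordinate of p and of q, so over B1 x B2 it ranges between its values at
   two pairs of opposite corners.  Those differ by
   u (x1 + y1 + x2 + y2 + 2u) / ((x2 - x1) + (y2 - y1)) <= 4u / sqrt u, since
   the corners lie in [0,1]^2 and the boxes are at distance at least sqrt u. *)

From Stdlib Require Import Reals Lra Psatz Lia Classical.
Open Scope R_scope.

Definition antidiag_x (p q : R * R) : R :=
  (fst p * snd q - snd p * fst q) / ((fst q + snd q) - (fst p + snd p)).

Definition in_square (u x y : R) (p : R * R) : Prop :=
  x <= fst p <= x + u /\ y <= snd p <= y + u.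

Lemma mobius_le (f : R -> R) (al be ga de x x' : R) :
  (forall z, f z = (al * z + be) / (ga * z + de)) ->
  0 < ga * x + de -> 0 < ga * x' + de -> 0 <= (al * de - be * ga) * (x' - x) ->
  f x <= f x'.
Proof.
  intros Hf Hx Hx' Hmono; rewrite !Hf.
  assert (Hdiff : (al * x' + be) / (ga * x' + de) - (al * x + be) / (ga * x + de) =
    (al * de - be * ga) * (x' - x) * / ((ga * x + de) * (ga * x' + de))) by (field; lra).
  enough (0 <= (al * de - be * ga) * (x' - x) * / ((ga * x + de) * (ga * x' + de))) by lra.
  apply Rmult_le_pos; [lra|].
  apply Rlt_le, Rinv_0_lt_compat, Rmult_lt_0_compat; lra.
Qed.

Lemma antidiag_x_incr_px px px' py qx qy :
  py <= qy -> 0 <= qx + qy -> 0 < qx + qy - (px + py) -> 0 < qx + qy - (px' + py) ->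
  px <= px' -> antidiag_x (px, py) (qx, qy) <= antidiag_x (px', py) (qx, qy).
Proof.
  intros.
  apply (mobius_le (fun z => antidiag_x (z, py) (qx, qy)) qy (- (py * qx)) (-1) (qx + qy - py));
    [intros z; unfold antidiag_x; simpl; f_equal; ring | lra | lra |].
  assert (0 <= (qx + qy) * (qy - py)) by nra; nra.
Qed.

Lemma antidiag_x_decr_py px py py' qx qy :
  px <= qx -> 0 <= qx + qy -> 0 < qx + qy - (px + py) -> 0 < qx + qy - (px + py') ->
  py' <= py -> antidiag_x (px, py) (qx, qy) <= antidiag_x (px, py') (qx, qy).
Proof.
  intros.
  apply (mobius_le (fun z => antidiag_x (px, z) (qx, qy)) (- qx) (px * qy) (-1) (qx + qy - px));
    [intros z; unfold antidiag_x; simpl; f_equal; ring | lra | lra |].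
  assert (0 <= (qx + qy) * (qx - px)) by nra; nra.
Qed.

Lemma antidiag_x_decr_qx px py qx qx' qy :
  py <= qy -> 0 <= px + py -> 0 < qx + qy - (px + py) -> 0 < qx' + qy - (px + py) ->
  qx' <= qx -> antidiag_x (px, py) (qx, qy) <= antidiag_x (px, py) (qx', qy).
Proof.
  intros.
  apply (mobius_le (fun z => antidiag_x (px, py) (z, qy)) (- py) (px * qy) 1 (qy - px - py));
    [intros z; unfold antidiag_x; simpl; f_equal; ring | lra | lra |].
  assert (0 <= (px + py) * (qy - py)) by nra; nra.
Qed.

Lemma antidiag_x_incr_qy px py qx qy qy' :
  px <= qx -> 0 <= px + py -> 0 < qx + qy - (px + py) -> 0 < qx + qy' - (px + py) ->
  qy <= qy' -> antidiag_x (px, py) (qx, qy) <= antidiag_x (px, py) (qx, qy').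
Proof.
  intros.
  apply (mobius_le (fun z => antidiag_x (px, py) (qx, z)) px (- (py * qx)) 1 (qx - px - py));
    [intros z; unfold antidiag_x; simpl; f_equal; ring | lra | lra |].
  assert (0 <= (px + py) * (qx - px)) by nra; nra.
Qed.

Section SquarePair.

Variables u x1 y1 x2 y2 : R.
Hypotheses (u_pos : 0 < u) (x1_ge0 : 0 <= x1) (y1_ge0 : 0 <= y1)
  (dx_ge : u <= x2 - x1) (dy_ge : u <= y2 - y1) (sep : 2 * u < (x2 - x1) + (y2 - y1)).

Lemma square_pair_sum_lt p q :
  in_square u x1 y1 p -> in_square u x2 y2 q -> fst p + snd p < fst q + snd q.
Proof. unfold in_square; lra. Qed.

Lemma antidiag_x_le_corner p q : in_square u x1 y1 p -> in_square u x2 y2 q ->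
  antidiag_x p q <= antidiag_x (x1 + u, y1) (x2, y2 + u).
Proof.
  destruct p as [px py], q as [qx qy]; unfold in_square; simpl; intros Hp Hq.
  apply Rle_trans with (antidiag_x (x1 + u, py) (qx, qy)); [apply antidiag_x_incr_px; lra|].
  apply Rle_trans with (antidiag_x (x1 + u, y1) (qx, qy)); [apply antidiag_x_decr_py; lra|].
  apply Rle_trans with (antidiag_x (x1 + u, y1) (x2, qy)); [apply antidiag_x_decr_qx; lra|].
  apply antidiag_x_incr_qy; lra.
Qed.

Lemma antidiag_x_ge_corner p q : in_square u x1 y1 p -> in_square u x2 y2 q ->
  antidiag_x (x1, y1 + u) (x2 + u, y2) <= antidiag_x p q.
Proof.
  destruct p as [px py], q as [qx qy]; unfold in_square; simpl; intros Hp Hq.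
  apply Rle_trans with (antidiag_x (x1, py) (qx, qy)); [|apply antidiag_x_incr_px; lra].
  apply Rle_trans with (antidiag_x (x1, y1 + u) (qx, qy)); [|apply antidiag_x_decr_py; lra].
  apply Rle_trans with (antidiag_x (x1, y1 + u) (x2 + u, qy)); [|apply antidiag_x_decr_qx; lra].
  apply antidiag_x_incr_qy; lra.
Qed.

Lemma antidiag_x_corner_gap :
  (antidiag_x (x1 + u, y1) (x2, y2 + u) - antidiag_x (x1, y1 + u) (x2 + u, y2)) *
    ((x2 - x1) + (y2 - y1)) = u * (x1 + y1 + x2 + y2 + 2 * u).
Proof. unfold antidiag_x; simpl; field; lra. Qed.

Hypotheses (x2_le : x2 + u <= 1) (y2_le : y2 + u <= 1)
  (far : u <= (x2 - x1) ^ 2 + (y2 - y1) ^ 2).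

Lemma antidiag_x_corner_gap_le :
  antidiag_x (x1 + u, y1) (x2, y2 + u) - antidiag_x (x1, y1 + u) (x2 + u, y2) <= 4 * sqrt u.
Proof.
  assert (Hr : sqrt u * sqrt u = u) by (apply sqrt_sqrt; lra).
  assert (Hr0 : 0 <= sqrt u) by apply sqrt_pos.
  assert (HrE : sqrt u <= (x2 - x1) + (y2 - y1)) by nra.
  apply (Rmult_le_reg_r ((x2 - x1) + (y2 - y1))); [lra|].
  rewrite antidiag_x_corner_gap; nra.
Qed.

End SquarePair.

Lemma on_line_through_of_on_line a b p q :
  on_line a b p -> on_line a b q -> fst p + snd p <> fst q + snd q ->
  on_line_through p q b.
Proof.
  intros [l ->] [m ->]; simpl; intros Hsum.
  assert (Hlm : m - l <> 0) by (intro; apply Hsum; replace m with l by lra; ring).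
  exists (- l / (m - l)); destruct b as [b1 b2]; simpl; f_equal; field; lra.
Qed.

Lemma antidiag_x_through p q r :
  on_line_through p q r -> fst r + snd r = 0 -> fst p + snd p <> fst q + snd q ->
  antidiag_x p q = fst r.
Proof.
  destruct p as [px py], q as [qx qy]; intros [t ->]; simpl; intros Hr Hsum.
  assert (Ht : t = - (px + py) / ((qx + qy) - (px + py))) by (field_simplify_eq; lra).
  unfold antidiag_x; simpl; rewrite Ht; field; lra.
Qed.

Lemma distinf_antidiag b b' : fst b + snd b = 0 -> fst b' + snd b' = 0 ->
  distinf b b' = Rabs (fst b - fst b').
Proof.
  intros Hb Hb'; unfold distinf.
  replace (snd b - snd b') with (- (fst b - fst b')) by lra.
  rewrite Rabs_Ropp; apply Rmax_left; lra.
Qed.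

Lemma u_of_pos s : 0 < u_of s.
Proof. unfold u_of; apply Rinv_0_lt_compat, pow_lt; lra. Qed.

Lemma u_of_dichotomy s : 1 / 4 <= u_of s \/ u_of s <= 1 / 8.
Proof.
  unfold u_of; assert (H2s : 0 < 2 ^ s) by (apply pow_lt; lra).
  destruct (Nat.le_gt_cases s 2) as [Hs | Hs]; [left | right].
  - assert (2 ^ s <= 2 ^ 2) by (apply Rle_pow; lra || lia).
    replace (1 / 4) with (/ 2 ^ 2) by (simpl; field).
    apply Rinv_le_contravar; assumption.
  - assert (2 ^ 3 <= 2 ^ s) by (apply Rle_pow; lra || lia).
    replace (1 / 8) with (/ 2 ^ 3) by (simpl; field).
    apply Rinv_le_contravar; simpl in *; lra.
Qed.

Lemma box_index_edge_le s i : box_index s i -> INR i * u_of s + u_of s <= 1.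
Proof.
  unfold box_index, u_of; intros Hi.
  assert (H2s : 0 < 2 ^ s) by (apply pow_lt; lra).
  assert (Hle : INR (S i) <= 2 ^ s)
    by (replace 2 with (INR 2) by (simpl; ring); rewrite <- pow_INR; apply le_INR; lia).
  rewrite S_INR in Hle.
  apply (Rmult_le_reg_r (2 ^ s)); [assumption|].
  field_simplify; lra.
Qed.

Lemma in_box_in_square s i j p :
  in_box s i j p -> in_square (u_of s) (INR i * u_of s) (INR j * u_of s) p.
Proof. unfold in_box, in_square; rewrite !plus_INR; simpl INR; lra. Qed.

Lemma center_in_box s i j : in_box s i j (center s i j).
Proof.
  assert (Hu := u_of_pos s).
  unfold in_box, center; rewrite !plus_INR; simpl INR; simpl; nra.
Qed.

Lemma Rpower_fifth_pow u : 0 < u -> Rpower u (1 / 5) ^ 5 = u.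
Proof.
  intros Hu; rewrite <- Rpower_pow by apply exp_pos.
  rewrite Rpower_mult; replace (1 / 5 * INR 5) with 1 by (simpl; field).
  apply Rpower_1, Hu.
Qed.

Lemma fifth_root_lt v : 0 < v -> v ^ 5 <= 1 / 8 -> v < 66 / 100.
Proof.
  intros Hv Hv5; apply Rnot_le_lt; intros Hge.
  assert ((66 / 100) ^ 5 <= v ^ 5) by (apply pow_incr; lra); lra.
Qed.

(* With v = u^(1/5) < 0.66, the chord satisfies v t <= u and t >= (D - 1) u,
   so D v <= 1 + v and D^2 u = (D v)^2 v^3 <= (1 + v)^2 v^3 < 1. *)
Lemma steep_chord_rise_lt u D a1 a2 t :
  0 < u -> u <= 1 / 8 -> Rpower u (1 / 5) <= a1 -> 0 < a2 <= 1 ->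
  0 <= D -> 1 <= D ^ 2 * u -> a1 * t <= u -> a2 * t < (D - 1) * u.
Proof.
  intros Hu Hu8 Ha1 Ha2 HD Hfar Hrun; apply Rnot_le_lt; intros Hrise.
  set (v := Rpower u (1 / 5)) in *.
  assert (Hv0 : 0 < v) by apply exp_pos.
  assert (Hv5 : v ^ 5 = u) by (apply Rpower_fifth_pow, Hu).
  assert (Hv : v < 66 / 100) by (apply fifth_root_lt; lra).
  assert (HD2 : 2 < D) by nra.
  assert (Ht0 : 0 < t) by nra.
  assert (Ht : (D - 1) * u <= t) by nra.
  assert (HDv : D * v <= 1 + v) by nra.
  assert (Hsq : (D * v) ^ 2 <= (1 + v) ^ 2) by (apply pow_incr; nra).
  assert (Hv3 : v ^ 3 <= (66 / 100) ^ 3) by (apply pow_incr; lra).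
  assert (Hv3' : 0 <= v ^ 3) by (apply pow_le; lra).
  assert (Hsq' : (1 + v) ^ 2 <= (166 / 100) ^ 2) by (apply pow_incr; lra).
  assert (D ^ 2 * v ^ 5 <= (1 + v) ^ 2 * v ^ 3)
    by (replace (D ^ 2 * v ^ 5) with ((D * v) ^ 2 * v ^ 3) by ring;
        apply Rmult_le_compat_r; assumption).
  nra.
Qed.

Section GoodPair.

Variables s i1 j1 i2 j2 : nat.
Hypothesis good : good_pair s i1 j1 i2 j2.

Lemma good_pair_ordered : (i1 <= i2)%nat /\ (j1 <= j2)%nat.
Proof.
  destruct good as [not_null _].
  apply NNPP in not_null; unfold ple, center in not_null; simpl in not_null.
  assert (Hu := u_of_pos s).
  split; apply INR_le; nra.
Qed.

Lemma good_pair_far :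
  u_of s <= ((INR i2 - INR i1) * u_of s) ^ 2 + ((INR j2 - INR j1) * u_of s) ^ 2.
Proof.
  destruct good as [not_null [not_close _]]; apply NNPP in not_null.
  assert (Hu := u_of_pos s).
  assert (Hdist : sqrt (u_of s) <= dist2 (center s i1 j1) (center s i2 j2))
    by (apply Rnot_lt_le; intros Hlt; apply not_close; split; assumption).
  unfold dist2, center in Hdist; cbn [fst snd] in Hdist.
  apply sqrt_le_0 in Hdist; [nra | lra | apply Rplus_le_le_0_compat; apply pow2_ge_0].
Qed.

Lemma good_pair_steep_line : exists a b, unit_pos_dir a /\
  traverses s i1 j1 i2 j2 a b /\ Rpower (u_of s) (1 / 5) <= lhat a.
Proof.
  destruct good as [not_null [not_close not_nondiag]]; apply NNPP in not_null.
  apply NNPP; intros Hnone; apply not_nondiag; split; [assumption | split].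
  - apply Rle_ge, Rnot_lt_le; intros Hlt; apply not_close; split; assumption.
  - intros a b Ha Ht; apply Rnot_le_lt; intros Hle; apply Hnone; exists a, b; auto.
Qed.

(* Both coordinates of a unit vector are >= u^(1/5), so u^(2/5) <= 1/2 and u < 1/4. *)
Lemma good_pair_u_le : u_of s <= 1 / 8.
Proof.
  destruct good_pair_steep_line as (a & _ & [_ [_ Hunit]] & _ & Hsteep).
  assert (Hu := u_of_pos s).
  destruct (u_of_dichotomy s) as [Hbig | Hsmall]; [exfalso | exact Hsmall].
  set (v := Rpower (u_of s) (1 / 5)) in *.
  assert (Hv5 : v ^ 5 = u_of s) by (apply Rpower_fifth_pow, Hu).
  assert (Hv0 : 0 < v) by apply exp_pos.
  unfold lhat in Hsteep.
  assert (v ^ 2 <= fst a ^ 2)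
    by (apply pow_incr; split; [lra | eapply Rle_trans; [exact Hsteep | apply Rmin_l]]).
  assert (v ^ 2 <= snd a ^ 2)
    by (apply pow_incr; split; [lra | eapply Rle_trans; [exact Hsteep | apply Rmin_r]]).
  assert (Hv2 : v ^ 2 <= 1 / 2) by lra.
  assert (v ^ 5 <= v * (1 / 2) ^ 2).
  { replace (v ^ 5) with (v * (v ^ 2) ^ 2) by ring.
    apply Rmult_le_compat_l; [lra | apply pow_incr; split; [apply pow2_ge_0 | lra]]. }
  nra.
Qed.

Lemma good_pair_separated : (i1 < i2)%nat /\ (j1 < j2)%nat.
Proof.
  destruct good_pair_ordered as [Hi Hj].
  destruct good_pair_steep_line
    as (a & b & [Ha1 [Ha2 Hunit]] & [[p [[l ->] Hp]] [q [[m ->] Hq]]] & Hsteep).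
  apply in_box_in_square in Hp, Hq; unfold in_square in Hp, Hq; cbn [fst snd] in Hp, Hq.
  assert (Hu := u_of_pos s); assert (Hu8 := good_pair_u_le); assert (Hfar := good_pair_far).
  assert (Hsteep1 : Rpower (u_of s) (1 / 5) <= fst a)
    by (eapply Rle_trans; [exact Hsteep | apply Rmin_l]).
  assert (Hsteep2 : Rpower (u_of s) (1 / 5) <= snd a)
    by (eapply Rle_trans; [exact Hsteep | apply Rmin_r]).
  split; apply Nat.le_neq; split; try assumption; intros <-;
    [apply le_INR in Hj | apply le_INR in Hi].
  - assert (snd a * (m - l) < (INR j2 - INR j1 - 1) * u_of s); [|lra].
    apply (steep_chord_rise_lt (u_of s) (INR j2 - INR j1) (fst a)); try split; nra.
  - assert (fst a * (m - l) < (INR i2 - INR i1 - 1) * u_of s); [|lra].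
    apply (steep_chord_rise_lt (u_of s) (INR i2 - INR i1) (snd a)); try split; nra.
Qed.

End GoodPair.

Lemma good_pair_window s i1 j1 i2 j2 :
  box_index s i2 -> box_index s j2 -> good_pair s i1 j1 i2 j2 ->
  exists lo, forall p q, in_box s i1 j1 p -> in_box s i2 j2 q ->
    fst p + snd p < fst q + snd q /\ lo <= antidiag_x p q <= lo + 4 * sqrt (u_of s).
Proof.
  intros Bi2 Bj2 good.
  destruct (good_pair_separated s i1 j1 i2 j2 good) as [Hi Hj].
  apply le_INR in Hi, Hj; rewrite S_INR in Hi, Hj.
  assert (Hu := u_of_pos s); assert (Hu8 := good_pair_u_le s i1 j1 i2 j2 good).
  assert (Hfar := good_pair_far s i1 j1 i2 j2 good).
  assert (Hx2 := box_index_edge_le s i2 Bi2); assert (Hy2 := box_index_edge_le s j2 Bj2).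
  assert (Hi1 := pos_INR i1); assert (Hj1 := pos_INR j1).
  set (u := u_of s) in *.
  set (x1 := INR i1 * u); set (y1 := INR j1 * u); set (x2 := INR i2 * u); set (y2 := INR j2 * u).
  assert (Hx1 : 0 <= x1) by (unfold x1; nra).
  assert (Hy1 : 0 <= y1) by (unfold y1; nra).
  assert (Hdx : u <= x2 - x1) by (unfold x1, x2; nra).
  assert (Hdy : u <= y2 - y1) by (unfold y1, y2; nra).
  assert (Hfar' : u <= (x2 - x1) ^ 2 + (y2 - y1) ^ 2) by (unfold x1, x2, y1, y2; nra).
  assert (Hsep : 2 * u < (x2 - x1) + (y2 - y1)) by nra.
  exists (antidiag_x (x1, y1 + u) (x2 + u, y2)); intros p q Hp Hq.
  apply in_box_in_square in Hp, Hq; fold u x1 y1 x2 y2 in Hp, Hq.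
  split; [|split].
  - apply (square_pair_sum_lt u x1 y1 x2 y2); assumption.
  - apply antidiag_x_ge_corner; assumption.
  - apply Rle_trans with (antidiag_x (x1 + u, y1) (x2, y2 + u));
      [apply antidiag_x_le_corner; assumption|].
    assert (antidiag_x (x1 + u, y1) (x2, y2 + u) - antidiag_x (x1, y1 + u) (x2 + u, y2)
            <= 4 * sqrt u) by (apply antidiag_x_corner_gap_le; unfold x2, y2 in *; lra).
    lra.
Qed.

Lemma traverses_antidiag_in_window s i1 j1 i2 j2 a b lo hi :
  (forall p q, in_box s i1 j1 p -> in_box s i2 j2 q ->
     fst p + snd p < fst q + snd q /\ lo <= antidiag_x p q <= hi) ->
  traverses s i1 j1 i2 j2 a b -> fst b + snd b = 0 -> lo <= fst b <= hi.
Proof.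
  intros Hwin [[p [Hpl Hp]] [q [Hql Hq]]] Hb.
  destruct (Hwin p q Hp Hq) as [Hsum Hrange].
  rewrite <- (antidiag_x_through p q b); [exact Hrange | | exact Hb | lra].
  apply (on_line_through_of_on_line a); [assumption | assumption | lra].
Qed.

Theorem lemma7 :
  (forall (s i1 j1 i2 j2 : nat),
     box_index s i1 -> box_index s j1 -> box_index s i2 -> box_index s j2 ->
     good_pair s i1 j1 i2 j2 ->
     forall a b a' b' : R * R,
       unit_pos_dir a -> fst b + snd b = 0 -> traverses s i1 j1 i2 j2 a b ->
       unit_pos_dir a' -> fst b' + snd b' = 0 -> traverses s i1 j1 i2 j2 a' b' ->
       distinf b b' <= 4 * sqrt (u_of s))
  /\
  (exists C : R, 0 <= C /\
     forall (s i1 j1 i2 j2 : nat),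
       box_index s i1 -> box_index s j1 -> box_index s i2 -> box_index s j2 ->
       good_pair s i1 j1 i2 j2 ->
       forall a b bc : R * R,
         unit_pos_dir a -> fst b + snd b = 0 -> traverses s i1 j1 i2 j2 a b ->
         on_line_through (center s i1 j1) (center s i2 j2) bc ->
         fst bc + snd bc = 0 ->
         distinf bc b <= C * sqrt (u_of s)).
Proof.
  split; [| exists 4; split; [lra |]];
    intros s i1 j1 i2 j2 _ _ Bi2 Bj2 good;
    destruct (good_pair_window s i1 j1 i2 j2 Bi2 Bj2 good) as [lo Hwin].
  - intros a b a' b' _ Hb Ht _ Hb' Ht'.
    assert (Hrange := traverses_antidiag_in_window _ _ _ _ _ _ _ _ _ Hwin Ht Hb).
    assert (Hrange' := traverses_antidiag_in_window _ _ _ _ _ _ _ _ _ Hwin Ht' Hb').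
    rewrite distinf_antidiag by assumption; apply Rabs_le; lra.
  - intros a b bc _ Hb Ht Hc Hbc.
    assert (Hrange := traverses_antidiag_in_window _ _ _ _ _ _ _ _ _ Hwin Ht Hb).
    destruct (Hwin _ _ (center_in_box s i1 j1) (center_in_box s i2 j2)) as [Hsum Hcrange].
    rewrite (antidiag_x_through _ _ bc Hc Hbc) in Hcrange by lra.
    rewrite distinf_antidiag by assumption; apply Rabs_le; lra.
Qed.
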